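(* Let $\mu,\varepsilon,\nu,\Omega,\omega$ be real or complex parameters with $\mu\neq 0$ and $\nu\notin\{2,3,4,\dots\}$, and consider the grand confluent hypergeometric (GCH) equation $$x\,y''(x)+\left(\mu x^2+\varepsilon x+\nu\right)y'(x)+\left(\Omega x+\varepsilon\omega\right)y(x)=0 .$$ Put $\gamma=\tfrac12(1+\nu)$, $a=\frac{\Omega}{2\mu}$, $\tilde\varepsilon=-\tfrac12\varepsilon x$ and $z=-\tfrac12\mu x^2$, and assume $1-a$ is not a nonpositive integer. Then the function $$ \begin{aligned} y(x)=RW\Big(\omega,\gamma;\tilde\varepsilon;z\Big)=z^{1-\gamma}\frac{\Gamma(1-a)}{\Gamma(2-\gamma)}\Bigg\{&\sum_{i_0=0}^{\infty}\frac{(a+1-\gamma)_{i_0}}{(1)_{i_0}(2-\gamma)_{i_0}}z^{i_0}\\ &+\Bigg\{\sum_{i_0=0}^{\infty}\frac{(i_0+1-\gamma+\frac{\omega}{2})}{(i_0+\frac12)(i_0+\frac32-\gamma)}\frac{(a+1-\gamma)_{i_0}}{(1)_{i_0}(2-\gamma)_{i_0}}\sum_{i_1=i_0}^{\infty}\frac{(a+\frac32-\gamma)_{i_1}(\frac32)_{i_0}(\frac52-\gamma)_{i_0}}{(a+\frac32-\gamma)_{i_0}(\frac32)_{i_1}(\frac52-\gamma)_{i_1}}z^{i_1}\Bigg\}\tilde\varepsilon\\ &+\sum_{n=2}^{\infty}\Bigg\{\sum_{i_0=0}^{\infty}\frac{(i_0+1-\gamma+\frac{\omega}{2})}{(i_0+\frac12)(i_0+\frac32-\gamma)}\frac{(a+1-\gamma)_{i_0}}{(1)_{i_0}(2-\gamma)_{i_0}}\\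 &\quad\times\prod_{k=1}^{n-1}\Bigg\{\sum_{i_k=i_{k-1}}^{\infty}\frac{(i_k+1-\gamma+\frac{\omega}{2}+\frac k2)}{(i_k+\frac12+\frac k2)(i_k+\frac32-\gamma+\frac k2)}\frac{(a+1-\gamma+\frac k2)_{i_k}(1+\frac k2)_{i_{k-1}}(2-\gamma+\frac k2)_{i_{k-1}}}{(a+1-\gamma+\frac k2)_{i_{k-1}}(1+\frac k2)_{i_k}(2-\gamma+\frac k2)_{i_k}}\Bigg\}\\ &\quad\times\sum_{i_n=i_{n-1}}^{\infty}\frac{(a+1-\gamma+\frac n2)_{i_n}(1+\frac n2)_{i_{n-1}}(2-\gamma+\frac n2)_{i_{n-1}}}{(a+1-\gamma+\frac n2)_{i_{n-1}}(1+\frac n2)_{i_n}(2-\gamma+\frac n2)_{i_n}}z^{i_n}\Bigg\}\tilde\varepsilon^{\,n}\Bigg\} \end{aligned} $$ is the power series expansion about $x=0$ of a solution (the solution of the second kind, corresponding to the indicial root $\lambda=1-\nu=2(1-\gamma)$) of the GCH equation.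
   Context: $(x)_n=\Gamma(x+n)/\Gamma(x)$ denotes the Pochhammer symbol (rising factorial), and for integers $m\ge n\ge 0$ a quotient $(b)_m/(b)_n$ is understood as $\prod_{j=n}^{m-1}(b+j)$. In the term with index $n\ge 2$, the product over $k=1,\dots,n-1$ denotes nested summation: the sum over $i_k$ runs from $i_{k-1}$ to $\infty$, with $i_{k-1}$ the summation index of the previous level, and the innermost sum over $i_n$ runs from $i_{n-1}$ to $\infty$. The factor $z^{1-\gamma}$ equals $\left(-\tfrac12\mu\right)^{1-\gamma}x^{2(1-\gamma)}$ for a fixed choice of branch. *)

From mathcomp Require Import all_boot all_order all_algebra.
Set Implicit Arguments. Unset Strict Implicit. Unset Printing Implicit Defensive.
Import Order.TTheory GRing.Theory Num.Theory.
Local Open Scope ring_scope.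

Section GCH.
Variable C : numClosedFieldType.

(* A formal series with a fixed (possibly non-integer) leading exponent lam is
   represented by its coefficient function c : int -> C, meaning
   sum_k c k * x^(k + lam).  Derivative and multiplication by x keep the same
   reference exponent lam. *)
Definition fser := int -> C.

(* d/dx : sum c_k x^(k+lam) |-> sum c_k (k+lam) x^(k+lam-1)
         = sum_k (k+1+lam) c_(k+1) x^(k+lam) *)
Definition fderiv (lam : C) (c : fser) : fser :=
  fun k => (((k + 1)%R)%:~R + lam) * c (k + 1)%R.

Definition fmulx (c : fser) : fser := fun k => c (k - 1)%R.

Definition gch_formal_solution (mu eps nu Om om lam : C) (c : fser) : Prop :=
  forall k : int,
    fmulx (fderiv lam (fderiv lam c)) k
    + (mu * fmulx (fmulx (fderiv lam c)) k + eps * fmulx (fderiv lam c) k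
       + nu * fderiv lam c k)
    + (Om * fmulx c k + eps * om * c k) = 0.

(* (b)_m / (b)_n  understood as  prod_{j=n}^{m-1} (b + j) *)
Definition pochq (b : C) (n m : nat) : C := \prod_(n <= j < m) (b + j%:R).
Definition poch (b : C) (n : nat) : C := pochq b 0 n.

Variables (mu eps nu Om om : C).

Definition gch_gamma : C := (1 + nu) / 2.
Definition gch_a : C := Om / (2 * mu).

(* level-k ratio  (a+1-g+k/2)_q (1+k/2)_p (2-g+k/2)_p /
                  ((a+1-g+k/2)_p (1+k/2)_q (2-g+k/2)_q)      (p <= q)
   For k = 0, p = 0 this is (a+1-g)_q / ((1)_q (2-g)_q). *)
Definition rwQ (k p q : nat) : C :=
  let g := gch_gamma in let a := gch_a in
  pochq (a + 1 - g + k%:R / 2) p q /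
  (pochq (1 + k%:R / 2) p q * pochq (2 - g + k%:R / 2) p q).

Definition rwW (k i : nat) : C :=
  let g := gch_gamma in
  (i%:R + 1 - g + om / 2 + k%:R / 2) /
  ((i%:R + 1 / 2 + k%:R / 2) * (i%:R + 3 / 2 - g + k%:R / 2)).

(* rwV n N = coefficient of z^N in the n-th bracket (the coefficient of
   etilde^n):  the nested sums over 0 <= i_0 <= i_1 <= ... <= i_n = N. *)
Fixpoint rwV (n N : nat) : C :=
  match n with
  | 0 => rwQ 0 0 N
  | n'.+1 => \sum_(i < N.+1) rwV n' i * rwW n' i * rwQ n'.+1 i N
  end.

(* Coefficients of y(x) = K * x^(2(1-g)) * sum_n etilde^n sum_N rwV n N z^N
   with etilde = -(eps/2) x, z = -(mu/2) x^2, collected by powers of x: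
   the coefficient of x^(m + 2(1-g)) is
   K * sum_{n + 2N = m} (-eps/2)^n (-mu/2)^N rwV n N. *)
Definition rw_coef (K : C) : fser :=
  fun k => match k with
  | Posz m => K * \sum_(n < m.+1) \sum_(N < m.+1 | (n + 2 * N)%N == m)
                 (- (eps / 2)) ^+ n * (- (mu / 2)) ^+ N * rwV n N
  | Negz _ => 0
  end.

End GCH.

(* With lam = 1 - nu the GCH equation for y = x^lam * sum_m c_m x^m is the
   three-term recurrence
     m (m + lam) c_m = - eps (m - 1 + lam + om) c_(m-1) - (mu (m - 2 + lam) + Om) c_(m-2),
   with no condition at m = 0 because lam is an indicial root.  The RW series
   has c_m = sum_(n + 2N = m) etilde^n z^N V(n, N), and the nested sums defining
   V satisfy V(n, N) = V(n, N-1) * ratio + V(n-1, N) * weight.  Multiplied by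
   m (m + lam) this becomes a two-term recurrence in (n, N) whose coefficients
   depend only on m = n + 2N; summed along the diagonal n + 2N = m it is exactly
   the three-term recurrence.  The hypothesis on nu keeps m + lam nonzero. *)

From mathcomp Require Import all_boot all_order all_algebra.
From mathcomp Require Import zify ring.
Import Order.TTheory GRing.Theory Num.Theory.
Local Open Scope ring_scope.

Lemma pochq_nn (C : numClosedFieldType) (b : C) n : pochq b n n = 1.
Proof. by rewrite /pochq big_geq. Qed.

Lemma pochq_recr (C : numClosedFieldType) (b : C) p q : (p <= q)%N ->
  pochq b p q.+1 = pochq b p q * (b + q%:R).
Proof. by move=> lepq; rewrite /pochq big_nat_recr. Qed.

Lemma mulr_div_halves (R : numFieldType) (x y u : R) : x != 0 -> y != 0 ->
  x * y * (u / 2 / (x / 2 * (y / 2))) = 2 * u.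
Proof. by move=> x_neq0 y_neq0; field; rewrite x_neq0 y_neq0. Qed.

Lemma gch_formal_solutionE (C : numClosedFieldType) (mu eps nu Om om lam : C)
    (c : fser C) :
  gch_formal_solution mu eps nu Om om lam c <->
  forall k : int,
    (k%:~R + 1 + lam) * (k%:~R + lam + nu) * c (k + 1)
    + eps * (k%:~R + lam + om) * c k
    + (mu * (k%:~R - 1 + lam) + Om) * c (k - 1) = 0.
Proof.
have eqnE k : fmulx (fderiv lam (fderiv lam c)) k
    + (mu * fmulx (fmulx (fderiv lam c)) k + eps * fmulx (fderiv lam c) k
       + nu * fderiv lam c k)
    + (Om * fmulx c k + eps * om * c k) =
  (k%:~R + 1 + lam) * (k%:~R + lam + nu) * c (k + 1)
    + eps * (k%:~R + lam + om) * c k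
    + (mu * (k%:~R - 1 + lam) + Om) * c (k - 1).
  rewrite /fmulx /fderiv !subrK intrD; ring.
by split=> sol k; [rewrite -eqnE | rewrite eqnE]; apply: sol.
Qed.

Section DiagonalSums.
Variable R : comNzRingType.
Variables (G : nat -> nat -> R) (w al be : nat -> R).

Definition diag_sum m :=
  \sum_(n < m.+1) \sum_(N < m.+1 | (n + 2 * N)%N == m) G n N.

Definition diag_term m N := if (2 * N <= m)%N then G (m - 2 * N) N else 0.

Lemma diag_termE m n N : m = (n + 2 * N)%N -> diag_term m N = G n N.
Proof. by move=> ->; rewrite /diag_term leq_addl addnK. Qed.

Lemma diag_term_out m N : (m < 2 * N)%N -> diag_term m N = 0.
Proof. by rewrite /diag_term ltnNge => /negbTE ->. Qed.

Lemma diag_sumE m : diag_sum m = \sum_(0 <= N < m.+1) diag_term m N.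
Proof.
rewrite /diag_sum big_mkord.
under eq_bigr do rewrite big_mkcond /=.
rewrite exchange_big /=; apply: eq_bigr => N _.
have [le2N | lt2N] := leqP (2 * N) m; last first.
  rewrite diag_term_out //; apply: big1 => n _; rewrite ifF //; apply/eqP; lia.
rewrite (diag_termE _ (m - 2 * N)) -?big_mkcond /=; last by lia.
have ltm : (m - 2 * N < m.+1)%N by lia.
rewrite (big_pred1 (Ordinal ltm)) // => n /=.
by apply/eqP/eqP => [h | ->]; [apply/val_inj => /=; lia | rewrite /= subnK].
Qed.

Hypothesis G_rec : forall m n N, m = (n + 2 * N)%N -> (0 < m)%N ->
  w m * G n N = (if n is n'.+1 then al m * G n' N else 0)
                + (if N is N'.+1 then be m * G n N' else 0).

Lemma diag_term0_rec m : w m.+1 * diag_term m.+1 0 = al m.+1 * diag_term m 0.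
Proof.
have tE k : diag_term k 0 = G k 0 by apply: diag_termE; rewrite addn0.
by rewrite !tE (G_rec m.+1 m.+1 0) ?addr0 ?addn0.
Qed.

Lemma diag_termS_rec m N :
  w m.+2 * diag_term m.+2 N.+1
  = al m.+2 * diag_term m.+1 N.+1 + be m.+2 * diag_term m N.
Proof.
have [le2N | lt2N] := leqP (2 * N) m; last first.
  by rewrite !diag_term_out ?mulr0 ?addr0 //; lia.
have [n ->] : exists n, m = (n + 2 * N)%N by exists (m - 2 * N)%N; lia.
rewrite (diag_termE _ n N.+1) ?(diag_termE _ n N) ?(G_rec _ n N.+1) //; try lia.
case: n => [|n]; last by rewrite (diag_termE _ n N.+1) //; lia.
by rewrite diag_term_out ?mulr0 //; lia.
Qed.

Lemma diag_sum_rec m :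
  w m.+1 * diag_sum m.+1
  = al m.+1 * diag_sum m + be m.+1 * (if m is m'.+1 then diag_sum m' else 0).
Proof.
case: m => [|m]; rewrite !diag_sumE.
  rewrite big_nat1 big_nat_recr //= big_nat1 (diag_term_out 1 1) // addr0.
  by rewrite diag_term0_rec mulr0 addr0.
rewrite big_nat_recl // mulrDr diag_term0_rec big_distrr /=.
under eq_bigr do rewrite diag_termS_rec.
rewrite big_split /= -!big_distrr /= addrA -mulrDr -big_nat_recl //.
rewrite (big_nat_recr m.+2 _ (diag_term m.+1)) ?(big_nat_recr m.+1 _ (diag_term m)) //.
by rewrite (diag_term_out m.+1 m.+2) ?(diag_term_out m m.+1) /= ?addr0 //; lia.
Qed.

End DiagonalSums.

Arguments diag_sum {R} G m.
Arguments diag_sum_rec {R G w al be} G_rec m.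

Section RWSeries.
Variable C : numClosedFieldType.
Variables (mu eps nu Om om : C).

Local Notation g := (gch_gamma nu).
Local Notation a := (gch_a mu Om).
Local Notation lam := (1 - nu).
Local Notation V := (rwV mu nu Om om).
Local Notation W := (rwW nu om).

Definition rw_ratio (k q : nat) : C :=
  (a + 1 - g + k%:R / 2 + q%:R) /
  ((1 + k%:R / 2 + q%:R) * (2 - g + k%:R / 2 + q%:R)).

Lemma rwQ_nn k p : rwQ mu nu Om k p p = 1.
Proof. by rewrite /rwQ !pochq_nn mulr1 divr1. Qed.

Lemma rwQ_recr k p q : (p <= q)%N ->
  rwQ mu nu Om k p q.+1 = rwQ mu nu Om k p q * rw_ratio k q.
Proof. by move=> lepq; rewrite /rwQ /rw_ratio !pochq_recr // !invfM; ring. Qed.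

Lemma rwV_recr n N :
  V n N.+1 = V n N * rw_ratio n N
             + (if n is n'.+1 then V n' N.+1 * W n' N.+1 else 0).
Proof.
case: n => [|n] /=; first by rewrite rwQ_recr // addr0.
rewrite big_ord_recr /= rwQ_nn mulr1 big_distrl; congr (_ + _).
by apply: eq_bigr => i _; rewrite rwQ_recr 1?mulrA // -ltnS.
Qed.

Lemma rwV_succ0 n : V n.+1 0 = V n 0 * W n 0.
Proof. by rewrite /= big_ord1 rwQ_nn mulr1. Qed.

Hypothesis nu_not_ge2 : forall n : nat, (2 <= n)%N -> nu != n%:R.

Lemma natr_add_lam_neq0 (x : nat) : (0 < x)%N -> x%:R + lam != 0.
Proof.
move=> x_gt0; apply: contra (nu_not_ge2 x.+1 x_gt0) => /eqP x_lam0.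
by rewrite -addn1 natrD -[X in _ == X]subr0 -x_lam0; apply/eqP; ring.
Qed.

Lemma rw_ratio_scaled n N (x := (n + 2 * N.+1)%:R : C) :
  x * (x + lam) * rw_ratio n N = 2 * (x - 2 + lam + 2 * a).
Proof.
have -> : rw_ratio n N = (x - 2 + lam + 2 * a) / 2 / (x / 2 * ((x + lam) / 2)).
  by rewrite /rw_ratio /x natrD natrM /gch_gamma; congr (_ / (_ * _)); field.
by rewrite mulr_div_halves ?natr_add_lam_neq0 ?pnatr_eq0 //; lia.
Qed.

Lemma rwW_scaled n N (x := (n.+1 + 2 * N)%:R : C) :
  x * (x + lam) * W n N = 2 * (x - 1 + lam + om).
Proof.
have -> : W n N = (x - 1 + lam + om) / 2 / (x / 2 * ((x + lam) / 2)).
  by rewrite /rwW /x natrD natrM -addn1 natrD /gch_gamma; congr (_ / (_ * _)); field.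
by rewrite mulr_div_halves ?natr_add_lam_neq0 ?pnatr_eq0 //; lia.
Qed.

Lemma rwV_rec m n N : m = (n + 2 * N)%N -> (0 < m)%N ->
  m%:R * (m%:R + lam) * V n N =
  (if n is n'.+1 then 2 * (m%:R - 1 + lam + om) * V n' N else 0)
  + (if N is N'.+1 then 2 * (m%:R - 2 + lam + 2 * a) * V n N' else 0).
Proof.
move=> -> m_gt0; case: N m_gt0 => [|N] m_gt0.
  case: n m_gt0 => [//|n] _.
  by rewrite rwV_succ0 addr0 -(rwW_scaled n 0); ring.
rewrite rwV_recr -(rw_ratio_scaled n N).
case: n {m_gt0} => [|n]; first by rewrite !addr0 add0r; ring.
by rewrite -(rwW_scaled n N.+1); ring.
Qed.

Hypothesis mu_neq0 : mu != 0.

Definition rw_term n N := (- (eps / 2)) ^+ n * (- (mu / 2)) ^+ N * V n N.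

Lemma rw_term_rec m n N : m = (n + 2 * N)%N -> (0 < m)%N ->
  m%:R * (m%:R + lam) * rw_term n N =
  (if n is n'.+1 then - (eps * (m%:R - 1 + lam + om)) * rw_term n' N else 0)
  + (if N is N'.+1 then - (mu * (m%:R - 2 + lam) + Om) * rw_term n N' else 0).
Proof.
move=> m_def m_gt0; rewrite /rw_term.
transitivity ((- (eps / 2)) ^+ n * (- (mu / 2)) ^+ N *
              (m%:R * (m%:R + lam) * V n N)); first by ring.
have -> : - (mu * (m%:R - 2 + lam) + Om) =
          - (mu / 2) * (2 * (m%:R - 2 + lam + 2 * a)) by rewrite /gch_a; field.
rewrite (rwV_rec _ _ _ m_def m_gt0).
by case: n {m_def m_gt0} => [|n]; case: N => [|N]; rewrite ?exprS; field.
Qed.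

Lemma rw_coef_rec K (k : int) (c := rw_coef mu eps nu Om om K) :
  (k%:~R + 1 + lam) * (k%:~R + lam + nu) * c (k + 1)
  + eps * (k%:~R + lam + om) * c k
  + (mu * (k%:~R - 1 + lam) + Om) * c (k - 1) = 0.
Proof.
case: k => [j|[|j]]; last 2 first.
- have lam_nu : ((- 1%Z)%:~R : C) + lam + nu = 0 by ring.
  by rewrite /c /= lam_nu !mulr0 mul0r !addr0.
- by rewrite /c /= !mulr0 !addr0.
have cE m : c (Posz m) = K * diag_sum rw_term m by [].
have -> : c (Posz j + 1) = K * diag_sum rw_term j.+1 by rewrite -cE -addn1 PoszD.
have -> : c (Posz j - 1) = K * (if j is i.+1 then diag_sum rw_term i else 0).
  by case: j => [|i]; [rewrite mulr0 | rewrite -cE -addn1 PoszD addrK].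
have := diag_sum_rec rw_term_rec j.
move: (if j is i.+1 then _ else _) => d_prev Dsum.
rewrite cE -[RHS](mulr0 K).
rewrite -[in RHS](subrr (j.+1%:R * (j.+1%:R + lam) * diag_sum rw_term j.+1)).
by rewrite {2}Dsum -pmulrn mulrSr; ring.
Qed.

End RWSeries.

Theorem mainTheorem2 (C : numClosedFieldType) (mu eps nu Om om K : C) :
  mu != 0 ->
  (forall n : nat, (2 <= n)%N -> nu != n%:R) ->
  (forall n : nat, 1 - gch_a mu Om != - n%:R) ->
  gch_formal_solution mu eps nu Om om (2 * (1 - gch_gamma nu))
    (rw_coef mu eps nu Om om K).
Proof.
(* The condition on 1 - a only makes the prefactor Gamma(1 - a), absorbed in K, finite. *)
move=> mu_neq0 nu_not_ge2 _.
have -> : 2 * (1 - gch_gamma nu) = 1 - nu by rewrite /gch_gamma; field.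
by apply/gch_formal_solutionE => k; apply: rw_coef_rec.
Qed.
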